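(* Let $(X,E,\ell)$ be a uniformly connected and fully deterministic edge-labelled directed graph with label alphabet $\Sigma$. Then for all $x,y\in X$ the language $L_{x,y}$ is growth sensitive.
   Context: $\Sigma$ is a finite alphabet, $\Sigma^*$ the set of finite words (including the empty word $\epsilon$), $\Sigma^+=\Sigma^*\setminus\{\epsilon\}$. A factor of $a_1\cdots a_n$ is a word $a_i\cdots a_j$, $1\le i\le j\le n$. For $L\subset\Sigma^*$, $\mathsf h(L)=\limsup_{n\to\infty}\frac1n\log|\{w\in L:|w|=n\}|$ and, for finite $F\subset\Sigma^+$, $L^F=\{w\in L:\text{no }v\in F\text{ is a factor of }w\}$. $L$ is growth sensitive if $\mathsf h(L^F)<\mathsf h(L)$ for every finite non-empty set $F\subset\Sigma^+$ consisting of factors of elements of $L$. $(X,E,\ell)$ is a directed graph whose edges $(x,a,y)$ carry labels $a\in\Sigma$ (two edges with the same endpoints have distinct labels); $L_{x,y}$ is the set of labels (concatenated edge labels) of all paths from $x$ to $y$, including $\epsilon$ for the empty path when $x=y$. The graph is fully deterministic if for every vertex $x$ and every $a\in\Sigma$ there is exactly one edge with initial vertex $x$ and label $a$. It is uniformly connected if there is a path between any ordered pair of vertices and there is $K$ such that for every edge from $x$ to $y$ there is a path from $y$ to $x$ of length at most $K$. *)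

From HB Require Import structures.
From mathcomp Require Import all_boot all_order all_algebra.
From mathcomp Require Import boolp classical_sets reals ereal exp sequences.
Set Implicit Arguments. Unset Strict Implicit. Unset Printing Implicit Defensive.
Import Order.TTheory GRing.Theory Num.Theory.
Local Open Scope ring_scope.

Definition language (Sigma : finType) := seq Sigma -> Prop.

Definition count_len (Sigma : finType) (L : language Sigma) (n : nat) : nat :=
  #|[set t : n.-tuple Sigma | `[< L (tval t) >] ]|.

Definition growth (R : realType) (Sigma : finType) (L : language Sigma) : \bar R :=
  limn_esup (fun n : nat =>
    if count_len L n == 0%N then -oo%E
    else ((ln (count_len L n)%:R) / n%:R)%:E).

Definition avoid (Sigma : finType) (L : language Sigma) (F : seq (seq Sigma))
  : language Sigma :=
  fun w => L w /\ (forall v, v \in F -> ~~ infix v w).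

Definition factor (Sigma : finType) (v w : seq Sigma) : Prop :=
  v != [::] /\ infix v w.

Definition growth_sensitive (R : realType) (Sigma : finType) (L : language Sigma)
  : Prop :=
  forall F : seq (seq Sigma),
    F != [::] ->
    (forall v, v \in F -> v != [::] /\ exists w, L w /\ factor v w) ->
    (growth R (avoid L F) < growth R L)%E.

(* Edge-labelled directed graph: E x a y means there is an edge (x,a,y).
   Edges are identified with triples, so two edges with the same endpoints
   have distinct labels. *)
Inductive walk (X : Type) (Sigma : finType) (E : X -> Sigma -> X -> Prop)
  : X -> seq Sigma -> X -> Prop :=
| walk_nil x : walk E x [::] x
| walk_cons x a z w y : E x a z -> walk E z w y -> walk E x (a :: w) y.

Definition Lxy (X : Type) (Sigma : finType) (E : X -> Sigma -> X -> Prop)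
  (x y : X) : language Sigma := fun w => walk E x w y.

Definition fully_deterministic (X : Type) (Sigma : finType)
  (E : X -> Sigma -> X -> Prop) : Prop :=
  forall (x : X) (a : Sigma), exists! y, E x a y.

Definition uniformly_connected (X : Type) (Sigma : finType)
  (E : X -> Sigma -> X -> Prop) : Prop :=
  (forall x y : X, exists w, walk E x w y) /\
  exists K : nat, forall (x : X) (a : Sigma) (y : X), E x a y ->
    exists w, walk E y w x /\ (size w <= K)%N.

From HB Require Import structures.
From mathcomp Require Import all_boot all_order all_algebra.
From mathcomp Require Import boolp classical_sets reals ereal exp sequences.
From mathcomp Require Import ring lra zify.
Set Implicit Arguments. Unset Strict Implicit. Unset Printing Implicit Defensive.
Import Order.TTheory GRing.Theory Num.Theory.
Local Open Scope ring_scope.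

(* Fix a forbidden factor v.  In the deterministic automaton given by the graph,
   uniform connectivity yields at every state z a loop starting with v whose length
   B does not depend on z.  Cut a v-free word of L_{x,y} of length n into chunks of
   length |v|, group the chunks D at a time, and insert a loop in front of one chunk
   of each group.  The results still lie in L_{x,y}, have length n + B k with
   k = n / (D |v|), and are pairwise distinct: scanning from the left, the next |v|
   letters tell whether a loop was inserted, since the original word avoids v.
   Hence c(n + B k) >= c_F(n) D^k, and for D large the gain k ln D beats the loss
   of rate caused by the B k extra letters. *)

Section LimsupFacts.
Local Open Scope ereal_scope.
Variables (R : realType) (u : nat -> \bar R).

Lemma limn_esupE : limn_esup u = ereal_inf (range (esups u)).
Proof. by rewrite limn_esup_lim; apply/cvg_lim => //; exact: cvg_esups_inf. Qed.

Lemma limn_esup_le_esups N : limn_esup u <= esups u N.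
Proof. by rewrite limn_esupE; apply: ereal_inf_lbound; exists N. Qed.

Lemma limn_esup_ge_frequently l :
  (forall N, exists2 n, (N <= n)%N & l <= u n) -> l <= limn_esup u.
Proof.
move=> ul; rewrite limn_esupE; apply: le_ereal_inf_tmp => _ [N _ <-].
have [n Nn lun] := ul N; apply: le_ereal_sup_tmp; exists (u n) => //.
by exists n.
Qed.

Lemma limn_esup_gt_frequently l :
  l < limn_esup u -> forall N, exists2 n, (N <= n)%N & l < u n.
Proof.
move=> lu N; have := lt_le_trans lu (limn_esup_le_esups N).
by move=> /ereal_sup_gt[_ [n Nn <-] lun]; exists n.
Qed.

End LimsupFacts.

Section LogRate.
Variable R : realType.
Implicit Types (c : nat -> nat) (d n : nat).

Definition log_rate c n : \bar R :=
  if c n == 0%N then -oo%E else (ln (c n)%:R / n%:R)%:E.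

Lemma growthE (Sigma : finType) (L : language Sigma) :
  growth R L = limn_esup (log_rate (count_len L)).
Proof. by []. Qed.

Lemma log_rate_ge0 c n : (0 < c n)%N -> (0 <= log_rate c n)%E.
Proof.
move=> cn0; rewrite /log_rate eqn0Ngt cn0.
by rewrite lee_fin divr_ge0 // ln_ge0 // ler1n.
Qed.

Lemma log_rate_le c d n : (0 < d)%N -> (c n <= d ^ n)%N ->
  (log_rate c n <= (ln d%:R)%:E)%E.
Proof.
move=> d0 cd; rewrite /log_rate; case: eqP => [_|/eqP cn0]; first exact: leNye.
have ln_d_ge0 : 0 <= ln (d%:R : R) by rewrite ln_ge0 // ler1n.
rewrite lee_fin; have [->|n0] := posnP n; first by rewrite invr0 mulr0.
rewrite ler_pdivrMr ?ltr0n // mulr_natr -lnXn ?ltr0n // -natrX.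
by rewrite ler_ln ?posrE ?ltr0n ?expn_gt0 ?d0 ?lt0n // ler_nat.
Qed.

(* Read H as ln c1(n) and l as ln D: a rate above r - e at length n yields a rate
   of at least r + e at length n + B k. *)
Lemma log_rate_gain (r e H l B k n : R) :
  0 <= B -> 0 <= k -> e <= 1 -> e * n <= k -> (`|r| + 1) * B + 2 <= l ->
  (r - e) * n <= H -> (r + e) * (n + B * k) <= H + k * l.
Proof.
move=> B0 k0 e1 ek hl hH; have rr := ler_norm r.
have : 0 <= k * B * (`|r| + 1 - r - e) by rewrite !mulr_ge0 //; lra.
have : k * ((`|r| + 1) * B + 2) <= k * l by rewrite ler_wpM2l.
nra.
Qed.

End LogRate.

Lemma leq_double_divM n q : (0 < q)%N -> (q <= n)%N -> (n <= 2 * (n %/ q * q))%N.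
Proof.
move=> q0 qn; have := divn_eq n q; have := ltn_pmod n q0.
by case: (n %/ q)%N => [|a]; rewrite ?mul0n; lia.
Qed.

Section LimsupLogRate.
Variables (R : realType) (c1 c2 : nat -> nat) (p B : nat).
Hypothesis p_gt0 : (0 < p)%N.
Hypothesis insertion : forall D n, (0 < D)%N ->
  (c1 n * D ^ (n %/ (D * p)) <= c2 (n + B * (n %/ (D * p))))%N.

Lemma limn_esup_log_rate_gain (r : R) :
  limn_esup (log_rate R c1) = r%:E ->
  exists2 e : R, 0 < e & ((r + e)%:E <= limn_esup (log_rate R c2))%E.
Proof.
(* The D^k insertion choices must outweigh the B k inserted letters at rate r. *)
move=> c1r; set T := (`|r| + 1) * B%:R + 2.
pose D := (Num.truncn (expR T)).+1.
have lnD : T <= ln D%:R.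
  by rewrite -{1}(expRK T) ler_ln ?posrE ?expR_gt0 ?ltr0n //; exact/ltW/truncnS_gt.
pose q := (D * p)%N; have q0 : (0 < q)%N by rewrite muln_gt0 p_gt0.
pose e : R := (2 * q%:R)^-1.
have e0 : 0 < e by rewrite invr_gt0 mulr_gt0 ?ltr0n.
have e1 : e <= 1.
  have q1 : 1 <= q%:R :> R by rewrite ler1n.
  by rewrite invf_le1 ?mulr_gt0 ?ltr0n //; lra.
exists e => //; apply: limn_esup_ge_frequently => N.
have [|n] := limn_esup_gt_frequently (l := (r - e)%:E) (u := log_rate R c1) _
  (maxn N (2 * q)).
  by rewrite c1r lte_fin; lra.
rewrite geq_max /log_rate => /andP[Nn qn] c1n_gt; pose k := (n %/ q)%N.
exists (n + B * k)%N; first exact: leq_trans Nn (leq_addr _ _).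
have [c1n0|c1n0] := eqVneq (c1 n) 0%N; first by rewrite c1n0 ltNge leNye in c1n_gt.
have n0 : (0 < n)%N by apply: leq_trans qn; rewrite muln_gt0.
have c2_ge := @insertion D n isT.
have c2m0 : c2 (n + B * k) != 0%N.
  by rewrite -lt0n (leq_trans _ c2_ge) // muln_gt0 lt0n c1n0 expn_gt0.
rewrite (negbTE c1n0) lte_fin ltr_pdivlMr ?ltr0n // in c1n_gt.
rewrite (negbTE c2m0) lee_fin ler_pdivlMr ?ltr0n ?addn_gt0 ?n0 // natrD natrM.
have ln_c2 : ln (c1 n)%:R + k%:R * ln D%:R <= ln (c2 (n + B * k)%N)%:R :> R.
  rewrite mulr_natl -lnXn ?ltr0n // -lnM ?posrE ?exprn_gt0 ?ltr0n ?lt0n //.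
  by rewrite ler_ln ?posrE ?mulr_gt0 ?exprn_gt0 ?ltr0n ?lt0n // -natrX -natrM ler_nat.
apply: le_trans ln_c2; apply: log_rate_gain => //; last exact: ltW.
rewrite /e mulrC ler_pdivrMr ?mulr_gt0 ?ltr0n // -natrM -natrM ler_nat.
by have := leq_double_divM q0 (leq_trans (leq_pmull _ _) qn); lia.
Qed.

Lemma limn_esup_log_rate_lt d : (0 < d)%N -> (forall n, c1 n <= d ^ n)%N ->
  (forall N, exists2 m, (N <= m)%N & (0 < c2 m)%N) ->
  (limn_esup (log_rate R c1) < limn_esup (log_rate R c2))%E.
Proof.
move=> d0 c1_le c2_frequent.
have : (limn_esup (log_rate R c1) <= (ln d%:R)%:E)%E.
  apply: le_trans (limn_esup_le_esups _ 0) _; apply: ge_ereal_sup => _ [n _ <-].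
  exact: log_rate_le.
case c1r : limn_esup => [r| |] c1_ub; last 2 first.
- by rewrite leye_eq in c1_ub.
- apply: lt_le_trans (limn_esup_ge_frequently (l := 0%E) _); first exact: ltNy0.
  by move=> N; have [m Nm c2m] := c2_frequent N; exists m => //; exact: log_rate_ge0.
have [e e0 re] := limn_esup_log_rate_gain c1r.
by apply: lt_le_trans re; rewrite lte_fin; lra.
Qed.

End LimsupLogRate.

Definition one_hot (D c : nat) : seq bool :=
  nseq c false ++ true :: nseq (D - c.+1) false.

Fixpoint one_hot_code (D : nat) (cs : seq 'I_D) : seq bool :=
  if cs is c :: cs' then one_hot D c ++ one_hot_code cs' else [::].

Lemma size_one_hot D c : (c < D)%N -> size (one_hot D c) = D.
Proof. by move=> cD; rewrite size_cat /= !size_nseq; lia. Qed.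

Lemma count_one_hot D c : count id (one_hot D c) = 1%N.
Proof. by rewrite count_cat /= !count_nseq /= !mul0n. Qed.

Lemma find_one_hot D c s : find id (one_hot D c ++ s) = c.
Proof.
rewrite /one_hot -catA /=; move: (nseq _ false ++ s) => t.
by elim: c => [|c IH] //=; rewrite IH.
Qed.

Lemma size_one_hot_code D (cs : seq 'I_D) : size (one_hot_code cs) = (D * size cs)%N.
Proof.
by elim: cs => [|c cs IH] /=; rewrite ?muln0 // size_cat size_one_hot // IH mulnS.
Qed.

Lemma count_one_hot_code D (cs : seq 'I_D) : count id (one_hot_code cs) = size cs.
Proof.
by elim: cs => [|c cs IH] //=; rewrite count_cat count_one_hot IH.
Qed.

Lemma one_hot_code_inj D : injective (@one_hot_code D).
Proof.
elim=> [|c1 cs1 IH] [|c2 cs2] //=.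
- by move/(congr1 size); rewrite size_cat size_one_hot //; case: c2 => /=; lia.
- by move/(congr1 size); rewrite size_cat size_one_hot //; case: c1 => /=; lia.
move/eqP; rewrite eqseq_cat ?size_one_hot // => /andP[/eqP c12 /eqP/IH ->].
by congr (_ :: _); apply: val_inj; rewrite /= -(find_one_hot D c1 [::]) c12 find_one_hot.
Qed.

Definition run (X Sigma : Type) (st : X -> Sigma -> X) (x : X) (w : seq Sigma) : X :=
  foldl st x w.

Lemma run_cat (X Sigma : Type) (st : X -> Sigma -> X) x u w :
  run st x (u ++ w) = run st (run st x u) w.
Proof. exact: foldl_cat. Qed.

Lemma run_loop_power (X Sigma : Type) (st : X -> Sigma -> X) z c j :
  run st z c = z -> run st z (flatten (nseq j c)) = z.
Proof. by move=> cz; elim: j => [|j IH] //=; rewrite run_cat cz IH. Qed.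

Section Determinism.
Variables (X : Type) (Sigma : finType) (E : X -> Sigma -> X -> Prop).

Lemma fully_deterministic_transition : fully_deterministic E ->
  exists st : X -> Sigma -> X, forall x a y, E x a y <-> y = st x a.
Proof.
move=> det; have [st Est] := choice (fun xa : X * Sigma => det xa.1 xa.2).
exists (fun x a => st (x, a)) => x a y; split => [Exay|->]; last by case: (Est (x, a)).
by have [_ uniq] := Est (x, a); rewrite (uniq _ Exay).
Qed.

Lemma walk_run (st : X -> Sigma -> X) :
  (forall x a y, E x a y <-> y = st x a) ->
  forall w x y, walk E x w y <-> run st x w = y.
Proof.
move=> Est w x y; split.
  by elim=> {w x y} [x|x a z w y /Est -> _ IH].
move=> <-; elim: w x => [|a w IH] x; first exact: walk_nil.
by apply: walk_cons (IH (st x a)); apply/Est.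
Qed.

End Determinism.

Section BlockInsertion.
Variables (X : Type) (Sigma : finType) (st : X -> Sigma -> X).
Variables (blk : X -> seq Sigma) (v : seq Sigma) (B : nat).
Hypothesis blk_loop : forall z, run st z (blk z) = z.
Hypothesis blk_prefix : forall z, prefix v (blk z).
Hypothesis size_blk : forall z, size (blk z) = B.

Local Notation p := (size v).

Fixpoint insert_blocks (z : X) (w : seq Sigma) (bs : seq bool) : seq Sigma :=
  if bs is b :: bs' then
    (if b then blk z else [::]) ++ take p w ++
    insert_blocks (run st z (take p w)) (drop p w) bs'
  else w.

Lemma run_insert_blocks bs z w : run st z (insert_blocks z w bs) = run st z w.
Proof.
elim: bs z w => [|b bs IH] z w //=.
rewrite run_cat (_ : run st z _ = z); last by case: b.
by rewrite run_cat IH -run_cat cat_take_drop.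
Qed.

Lemma size_insert_blocks bs z w :
  size (insert_blocks z w bs) = (size w + B * count id bs)%N.
Proof.
elim: bs z w => [|b bs IH] z w /=; first by rewrite muln0 addn0.
rewrite !size_cat IH size_drop size_take.
by case: b; rewrite /= ?size_blk; case: ltnP; lia.
Qed.

Lemma blk_neq_chunk z w rest rest' : (p <= size w)%N -> ~~ infix v w ->
  blk z ++ rest != take p w ++ rest'.
Proof.
move=> pw; apply: contraNneq; have [s ->] := prefixP (blk_prefix z).
rewrite -catA => /eqP; rewrite eqseq_cat ?size_takel // => /andP[/eqP -> _].
by rewrite -{2}(cat_take_drop p w) prefix_infix.
Qed.

Lemma insert_blocks_inj bs1 bs2 z w1 w2 : size bs1 = size bs2 ->
  (p * size bs1 <= size w1)%N -> (p * size bs2 <= size w2)%N ->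
  ~~ infix v w1 -> ~~ infix v w2 ->
  insert_blocks z w1 bs1 = insert_blocks z w2 bs2 -> w1 = w2 /\ bs1 = bs2.
Proof.
elim: bs1 bs2 z w1 w2 => [|b1 bs1 IH] [|b2 bs2] z w1 w2 //= [eq_size].
rewrite !mulnS => size_w1 size_w2 free_w1 free_w2.
have p_w1 := leq_trans (leq_addr _ _) size_w1.
have p_w2 := leq_trans (leq_addr _ _) size_w2.
have free_drop w : ~~ infix v w -> ~~ infix v (drop p w).
  by apply: contra => /(infix_catl (take p w)); rewrite cat_take_drop.
have chunks_eq : take p w1 ++ insert_blocks (run st z (take p w1)) (drop p w1) bs1 =
                 take p w2 ++ insert_blocks (run st z (take p w2)) (drop p w2) bs2 ->
                 w1 = w2 /\ bs1 = bs2.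
  move/eqP; rewrite eqseq_cat ?size_takel // => /andP[/eqP eq_take /eqP].
  rewrite eq_take => /(IH _ _ _ _ eq_size) eq_rest.
  have [eq_drop ->] : drop p w1 = drop p w2 /\ bs1 = bs2.
    by apply: eq_rest; rewrite ?size_drop ?leq_subRL //; exact: free_drop.
  by rewrite -(cat_take_drop p w1) eq_take eq_drop cat_take_drop.
case: b1; case: b2 => /= eq_ins.
- by move/eqP: eq_ins; rewrite eqseq_cat // => /andP[_ /eqP/chunks_eq[-> ->]].
- by move/eqP: eq_ins; rewrite (negbTE (blk_neq_chunk _ _ _ p_w2 free_w2)).
- by move/esym/eqP: eq_ins; rewrite (negbTE (blk_neq_chunk _ _ _ p_w1 free_w1)).
- by case/chunks_eq: eq_ins => -> ->.
Qed.

Lemma count_len_insert_blocks x y D n :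
  (count_len (fun w => run st x w = y /\ ~~ infix v w) n * D ^ (n %/ (D * p)) <=
   count_len (fun w => run st x w = y) (n + B * (n %/ (D * p))))%N.
Proof.
set k := (n %/ (D * p))%N.
have size_ins (wc : n.-tuple Sigma * k.-tuple 'I_D) :
    size (insert_blocks x wc.1 (one_hot_code wc.2)) == (n + B * k)%N.
  by rewrite size_insert_blocks count_one_hot_code !size_tuple.
pose f wc := Tuple (size_ins wc).
set A := [set t : n.-tuple Sigma | `[< run st x t = y /\ ~~ infix v t >] ].
have code_fits (c : k.-tuple 'I_D) (w : n.-tuple Sigma) :
    (p * size (one_hot_code c) <= size w)%N.
  by rewrite size_one_hot_code !size_tuple mulnA [(p * D)%N]mulnC mulnC leq_divM.
have f_inj : {in finset.setX A [set: k.-tuple 'I_D] &, injective f}.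
  move=> [w1 c1] [w2 c2]; rewrite !inE /= !andbT.
  move=> /asboolP[_ free1] /asboolP[_ free2] /(congr1 val) /= eq_ins.
  have [|eq_w eq_c] :=
    insert_blocks_inj _ (code_fits c1 w1) (code_fits c2 w2) free1 free2 eq_ins.
    by rewrite !size_one_hot_code !size_tuple.
  by rewrite (val_inj eq_w) (val_inj (one_hot_code_inj eq_c)).
have card_codes : #|[set: k.-tuple 'I_D]| = (D ^ k)%N.
  by rewrite cardsT card_tuple card_ord.
rewrite -card_codes -[count_len _ n]/#|A| -cardsX -(card_in_imset f_inj).
apply: subset_leq_card.
apply/fintype.subsetP => _ /imsetP[[w c] wc_in ->]; move: wc_in; rewrite !inE /= andbT.
by move=> /asboolP[acc_w _]; rewrite run_insert_blocks.
Qed.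

End BlockInsertion.

Lemma run_return (X Sigma : Type) (st : X -> Sigma -> X) K :
  (forall x a, exists r, run st (st x a) r = x /\ (size r <= K)%N) ->
  forall u z, exists r, run st (run st z u) r = z /\ (size r <= K * size u)%N.
Proof.
move=> back; elim=> [|a u IH] z; first by exists [::].
have [r1 [r1_back size_r1]] := IH (st z a); have [r [r_back size_r]] := back z a.
exists (r1 ++ r); rewrite run_cat r1_back r_back size_cat /=; split=> //; lia.
Qed.

Lemma exists_uniform_loop (X : Type) (Sigma : eqType) (st : X -> Sigma -> X) K
    (v : seq Sigma) z :
  (0 < size v)%N ->
  (forall x a, exists r, run st (st x a) r = x /\ (size r <= K)%N) ->
  exists b, [/\ run st z b = z, prefix v b & size b = (size v + K * size v)`!].
Proof.
(* The factorial is a multiple of every possible loop length, so the block length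
   does not depend on z. *)
move=> v_gt0 back; have [r [r_back size_r]] := run_return back v z.
set c := v ++ r; set N := (size v + K * size v)`!.
have c_gt0 : (0 < size c)%N by rewrite size_cat addn_gt0 v_gt0.
have c_dvd : (size c %| N)%N.
  by apply: dvdn_fact; rewrite c_gt0 size_cat leq_add2l.
have j_gt0 : (0 < N %/ size c)%N by rewrite divn_gt0 // dvdn_leq ?fact_gt0.
exists (flatten (nseq (N %/ size c) c)); split.
- by apply: run_loop_power; rewrite run_cat.
- by rewrite -(prednK j_gt0) /= -catA prefix_prefix.
- by rewrite size_flatten /shape map_nseq sumn_nseq mulnC divnK.
Qed.

Lemma count_len_mono (Sigma : finType) (L L' : language Sigma) n :
  (forall w, L w -> L' w) -> (count_len L n <= count_len L' n)%N.
Proof.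
move=> LL'; apply/subset_leq_card/fintype.subsetP => t.
by rewrite !inE; exact: LL'.
Qed.

Lemma count_len_le_card (Sigma : finType) (L : language Sigma) n :
  (count_len L n <= #|Sigma| ^ n)%N.
Proof. by rewrite -card_tuple; apply: max_card. Qed.

Lemma count_len_gt0 (Sigma : finType) (L : language Sigma) w :
  L w -> (0 < count_len L (size w))%N.
Proof.
by move=> Lw; apply/card_gt0P; exists (in_tuple w); rewrite inE; apply/asboolP.
Qed.

Theorem mainTheorem14 (R : realType) (Sigma : finType) (X : Type)
  (E : X -> Sigma -> X -> Prop) :
  uniformly_connected E -> fully_deterministic E ->
  forall x y : X, growth_sensitive R (Lxy E x y).
Proof.
move=> [_ [K back]] det x y [//|v F] _ F_factors.
have [st Est] := fully_deterministic_transition det.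
have L_run w : Lxy E x y w <-> run st x w = y := walk_run Est w x y.
have st_back z a : exists r, run st (st z a) r = z /\ (size r <= K)%N.
  have [r [/(walk_run Est) r_back size_r]] := back z a _ (proj2 (Est z a _) erefl).
  by exists r.
have [v_nil [w0 [L_w0 _]]] := F_factors v (mem_head v F).
have v_gt0 : (0 < size v)%N by rewrite lt0n size_eq0.
have [blk blk_spec] := choice (fun z => exists_uniform_loop z v_gt0 st_back).
have [blk_loop blk_prefix size_blk] := all_and3 blk_spec.
rewrite !growthE; apply: (@limn_esup_log_rate_lt R _ _ _ _ v_gt0 _ #|Sigma|).
- move=> D n _.
  have avoid_v w : avoid (Lxy E x y) (v :: F) w -> run st x w = y /\ ~~ infix v w.
    by case=> /L_run acc_w free_w; split; last exact: free_w (mem_head v F).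
  apply: leq_trans (leq_mul (count_len_mono n avoid_v) (leqnn _)) _.
  apply: leq_trans (count_len_insert_blocks blk_loop blk_prefix size_blk x y D n) _.
  by apply: count_len_mono => w /L_run.
- by move: v_gt0; case: (v) => // a l _; apply/card_gt0P; exists a.
- exact: count_len_le_card.
- move=> N; pose w := w0 ++ flatten (nseq N (blk y)).
  exists (size w); last first.
    by apply/count_len_gt0/L_run; rewrite run_cat (L_run w0).1 // run_loop_power.
  rewrite size_cat size_flatten /shape map_nseq sumn_nseq size_blk.
  by apply: leq_trans (leq_addl _ _); rewrite leq_pmull ?fact_gt0.
Qed.
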